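(* Assume $\operatorname{non}(\mathcal N)=\mathfrak c$. Then $\mathcal{ND}_{\mathfrak c}$ is strongly $\mathfrak c$-algebrable in $\left(\mathbb R^{[0,1]}\right)^{\mathfrak c}$.
   Context: For a regular infinite cardinal $\kappa$, a $\kappa$-sequence $(x_\alpha)_{\alpha<\kappa}$ converges to $x$ if for every neighbourhood $U$ of $x$ there is $\alpha_0<\kappa$ with $x_\alpha\in U$ for all $\alpha_0<\alpha<\kappa$; $\left(\mathbb R^{[0,1]}\right)^{\kappa}$ is the commutative real algebra of $\kappa$-sequences of functions $[0,1]\to\mathbb R$ with indexwise operations. $\lambda$ is Lebesgue measure, $\mathcal N$ the null subsets of $[0,1]$, $\operatorname{non}(\mathcal N)$ the least cardinality of a non-null subset of $[0,1]$. $\mathcal{ND}_{\kappa}$: $\kappa$-sequences of Lebesgue measurable $f_\alpha:[0,1]\to\mathbb R$ such that there is an integrable $g$ with $|f_\alpha|\le g$ a.e. for all $\alpha$, $f_\alpha\to f$ a.e. for some integrable $f$, and $\int|f_\alpha-f|\,d\lambda\not\to0$. $S$ is strongly $\mu$-algebrable if there is a set $X$ of $\mu$ algebraically independent elements such that every nonzero element of the (non-unital) algebra generated by $X$ belongs to $S$. *)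

From HB Require Import structures.
From mathcomp Require Import all_boot all_order all_algebra.
From mathcomp Require Import all_classical all_reals all_analysis.
From mathcomp Require mpoly.

Set Implicit Arguments.
Unset Strict Implicit.
Unset Printing Implicit Defensive.

Import Order.TTheory GRing.Theory Num.Theory.
Import numFieldTopology.Exports numFieldNormedType.Exports.
Local Open Scope classical_set_scope.
Local Open Scope ring_scope.

Definition unit_itv (R : realType) := {x : R | (0 <= x <= 1)%R}.

Definition ext01 (R : realType) (f : unit_itv R -> R) : R -> R :=
  fun x => match pselect (is_true (0 <= x <= 1)%R) with
           | left h => f (exist _ x h)
           | right _ => 0
           end.

Notation leb R := (@completed_lebesgue_measure R).
(* Its measurable space: R with the Lebesgue-measurable sets. *)
Definition lebT (R : realType) : measurableType _ :=
  ltac:(let t := type of (@completed_lebesgue_measure R) in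
        match t with set ?T -> _ => exact T end).

(* (I, lt) is a well-ordered index set of order type the initial ordinal of
   the continuum c = |R|: a strict well-order, |I| = |R|, and every proper
   initial segment has cardinality < |R|. *)
Definition continuum_index (R : realType) (I : Type) (lt : I -> I -> Prop) : Prop :=
  [/\ (forall a, ~ lt a a) /\
      (forall a b c, lt a b -> lt b c -> lt a c),
      (forall a b, lt a b \/ a = b \/ lt b a),
      well_founded lt,
      ([set: I] #= [set: R])%card &
      (forall a, ~ ([set: R] #<= [set b | lt b a])%card)].

Definition kconv (I : Type) (lt : I -> I -> Prop) (T : topologicalType)
  (s : I -> T) (x : T) : Prop :=
  forall U, nbhs x U -> exists a0, forall a, lt a0 a -> U (s a).

(* non(N) = c: every subset of [0,1] of cardinality < c is Lebesgue null. *)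
Definition nonN_eq_c (R : realType) : Prop :=
  forall A : set R, A `<=` `[0, 1]%classic ->
    ~ ([set: R] #<= A)%card -> (@lebesgue_measure R).-negligible A.

Definition ND (R : realType) (I : Type) (lt : I -> I -> Prop)
  (f : I -> unit_itv R -> R) : Prop :=
  [/\ (forall a, measurable_fun (`[0, 1]%classic : set (lebT R))
                                (ext01 (f a) : lebT R -> R)),
      (exists g : unit_itv R -> R,
          (leb R).-integrable `[0, 1]%classic (EFin \o ext01 g) /\
          forall a, {ae leb R, forall x, `[0, 1]%classic x ->
                                 `|ext01 (f a) x| <= ext01 g x}) &
      (exists F : unit_itv R -> R,
          [/\ (leb R).-integrable `[0, 1]%classic (EFin \o ext01 F),
              {ae leb R, forall x, `[0, 1]%classic x ->
                   @kconv I lt R (fun a => ext01 (f a) x) (ext01 F x)} &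
              ~ @kconv I lt (\bar R) (fun a => (\int[leb R]_(x in `[0%R, 1%R]%classic)
                                      `|ext01 (f a) x - ext01 F x|%:E)%E)
                         (0%E : \bar R)])].

Definition peval (R : realType) (I J : Type) (x : J -> I -> unit_itv R -> R)
  (n : nat) (t : 'I_n -> J) (P : mpoly.mpoly n R) : I -> unit_itv R -> R :=
  fun a u => mpoly.meval (fun i => x (t i) a u) P.

(* S is strongly c-algebrable in (R^[0,1])^I: there is a family of c = |R|
   distinct, algebraically independent elements such that every nonzero
   element of the (non-unital) algebra they generate lies in S. *)
Definition strongly_c_algebrable (R : realType) (I : Type)
  (S : (I -> unit_itv R -> R) -> Prop) : Prop :=
  exists (J : Type) (x : J -> I -> unit_itv R -> R),
    [/\ ([set: J] #= [set: R])%card,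
        injective x,
        (forall (n : nat) (t : 'I_n -> J) (P : mpoly.mpoly n R),
            injective t -> (exists m, mpoly.mcoeff m P <> 0) -> peval x t P <> (fun _ _ => 0)) &
        (forall (n : nat) (t : 'I_n -> J) (P : mpoly.mpoly n R),
            injective t -> mpoly.mcoeff mpoly.mnm0 P = 0 ->
            peval x t P <> (fun _ _ => 0) -> S (peval x t P))].

From HB Require Import structures.
From mathcomp Require Import all_boot all_order all_algebra.
From mathcomp Require Import mpoly.
From mathcomp Require Import all_classical all_reals all_analysis.
From mathcomp Require Import lra zify.

Set Implicit Arguments.
Unset Strict Implicit.
Unset Printing Implicit Defensive.

Import Order.TTheory GRing.Theory Num.Theory.
Import numFieldTopology.Exports numFieldNormedType.Exports.
Local Open Scope classical_set_scope.
Local Open Scope ring_scope.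

(* Fix a bijection th : I -> R and let segment a = th [{b | b < a}]. It has
   cardinality < c, so by non(N) = c its trace on [0, 1], and on every
   translate of [0, 1], is null. Every real z codes, through the natural number
   truncn z, a finite table assigning values to rational intervals, and the
   generator indexed by j is a |-> (value the table coded by th a gives to j)
   times the indicator of the complement of segment a. A polynomial P without
   constant term thus evaluates at a to amplitude a * 1_(support a), where
   support a = [0, 1] \ segment a has measure 1. Each x in [0, 1] lies in
   segment a for all a beyond thi x, so these functions tend to 0 everywhere and
   are dominated by a constant, while their L1 norm is |amplitude a|. Kronecker
   substitution yields a table at whose values P does not vanish, and as no
   translate of [0, 1[ is null, th a codes that table for cofinally many a: the
   L1 norms do not tend to 0, and P does not vanish on the generators. *)

Lemma sum_digits_inj (D n : nat) (a b : 'I_n -> nat) :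
  (forall i, a i < D)%N -> (forall i, b i < D)%N ->
  (\sum_(i < n) a i * D ^ i = \sum_(i < n) b i * D ^ i)%N -> a =1 b.
Proof.
elim: n a b => [|n IH] a b ha hb; first by move=> _ [].
rewrite !big_ord_recl /= !expn0 !muln1.
have shift (c : 'I_n.+1 -> nat) : (\sum_(i < n) c (lift ord0 i) * D ^ bump 0 i =
    D * \sum_(i < n) c (lift ord0 i) * D ^ i)%N.
  by rewrite big_distrr; apply: eq_bigr => i _; rewrite /bump add1n expnS mulnCA.
rewrite !shift => E.
have E0 : a ord0 = b ord0.
  have := congr1 (modn^~ D) E.
  by rewrite !(addnC (_ ord0)) !(mulnC D) !modnMDl !modn_small.
have D_gt0 : (0 < D)%N by have := ha ord0; lia.
have /IH E1 : (\sum_(i < n) a (lift ord0 i) * D ^ i =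
               \sum_(i < n) b (lift ord0 i) * D ^ i)%N.
  by move: E; rewrite E0 => /addnI /eqP; rewrite eqn_pmul2l // => /eqP.
by move=> i; case: (unliftP ord0 i) => [j ->|->] //; apply: E1.
Qed.

Lemma mnm_le_mdeg n (m : 'X_{1..n}) i : (m i <= mdeg m)%N.
Proof. by rewrite mdegE (bigD1 i) //= leq_addr. Qed.

Section KroneckerSubstitution.
Variables (R : idomainType) (n : nat) (P : {mpoly R[n]}).

Definition kronecker_exp (m : 'X_{1..n}) : nat := \sum_(i < n) m i * msize P ^ i.

Definition kronecker_subst : {poly R} :=
  \sum_(m <- msupp P) P@_m *: 'X^(kronecker_exp m).

Lemma horner_kronecker_subst y :
  kronecker_subst.[y] = P.@[fun i => y ^+ (msize P ^ i)].
Proof.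
rewrite mevalE horner_sum; apply: eq_bigr => m _.
rewrite hornerZ hornerXn -prodrXr; congr (_ * _).
by apply: eq_bigr => i _; rewrite -exprM mulnC.
Qed.

Lemma kronecker_exp_inj : {in msupp P &, injective kronecker_exp}.
Proof.
have digit_lt m i : m \in msupp P -> (m i < msize P)%N.
  by move=> /msize_mdeg_lt; apply: leq_ltn_trans; exact: mnm_le_mdeg.
move=> m m' mP m'P /sum_digits_inj eq_mm'; apply/mnmP => i.
exact: eq_mm' (digit_lt _ ^~ mP) (digit_lt _ ^~ m'P) i.
Qed.

Lemma kronecker_subst_neq0 : P != 0 -> kronecker_subst != 0.
Proof.
rewrite -msupp_eq0; case E: (msupp P) => [//|m0 s] _.
have m0P : m0 \in msupp P by rewrite E mem_head.
apply/eqP => /(congr1 (coefp (kronecker_exp m0))) /=.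
rewrite coef0 coef_sum (bigD1_seq m0) ?msupp_uniq //= coefZ coefXn eqxx mulr1.
rewrite big1_seq ?addr0 => [/eqP|m /andP[mm0 mP]].
  by rewrite mcoeff_eq0 m0P.
rewrite coefZ coefXn; case: eqP => [/kronecker_exp_inj|]; last by rewrite mulr0.
by move=> /(_ m0P mP) eq_m; rewrite eq_m eqxx in mm0.
Qed.

End KroneckerSubstitution.

Lemma meval_kronecker_neq0 (R : numFieldType) n (P : {mpoly R[n]}) : P != 0 ->
  exists k : nat, P.@[fun i => (k.+2%:R^-1 : R) ^+ (msize P ^ i)] != 0.
Proof.
move=> /kronecker_subst_neq0 q_neq0; apply: contrapT => /forallNP all_roots.
suff: (size (kronecker_subst P) < size (kronecker_subst P))%N by rewrite ltnn.
rewrite -{1}(size_mkseq (fun k => k.+2%:R^-1 : R) (size (kronecker_subst P))).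
apply: max_poly_roots q_neq0 _ _.
- apply/allP => _ /mapP[k _ ->]; apply/rootP.
  by rewrite horner_kronecker_subst; apply/eqP/negbNE/negP; exact: all_roots.
- by apply: mkseq_uniq => k k' /invr_inj /eqP; rewrite eqr_nat => /eqP [].
Qed.

Lemma meval_cst0 (R : comNzRingType) n (P : {mpoly R[n]}) :
  P.@[fun _ => 0] = P@_0%MM.
Proof.
rewrite mevalE {3}[P]mpolyE raddf_sum /=; apply: eq_bigr => m _.
by rewrite mcoeffZ mcoeffX prodrXr -mdegE expr0n mdeg_eq0.
Qed.

Lemma meval_norm_le (R : numDomainType) n (P : {mpoly R[n]}) (v : 'I_n -> R) :
  (forall i, `|v i| <= 1) -> `|P.@[v]| <= \sum_(m <- msupp P) `|P@_m|.
Proof.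
move=> v_le1; rewrite mevalE; apply: le_trans (ler_norm_sum _ _ _) _.
apply: ler_sum => m _; rewrite normrM ler_piMr // normr_prod.
by apply: prodr_ile1 => i _; rewrite normr_ge0 normrX exprn_ile1.
Qed.

Section CodingTables.
Variable R : realType.

(* On the rational interval ]a, b[ the entry (a, b, k, e) takes the value (k+2)^-e. *)
Definition table := seq (rat * rat * nat * nat).

Fixpoint lookup (w : table) (j : R) : R :=
  if w is (a, b, k, e) :: w' then
    if ratr a < j < ratr b then k.+2%:R^-1 ^+ e else lookup w' j
  else 0.

Definition decode_table (z : R) : table := odflt [::] (unpickle (Num.truncn z)).

Definition coef_at (j z : R) : R := lookup (decode_table z) j.

Lemma lookup_norm_le1 w j : `|lookup w j| <= 1.
Proof.
elim: w => [|[[[a b] k] e] w IH] /=; first by rewrite normr0 ler01.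
case: ifP => // _; rewrite normrX exprn_ile1 // normfV ger0_norm //.
by rewrite invf_le1 // ler1n.
Qed.

Lemma coef_at_pickle j z w : Num.truncn z = pickle w -> coef_at j z = lookup w j.
Proof. by rewrite /coef_at /decode_table => ->; rewrite pickleK. Qed.

Lemma rat_itv_isolating n (t : 'I_n -> R) : injective t -> forall i,
  exists ab : rat * rat, forall i', (ratr ab.1 < t i' < ratr ab.2) = (i' == i).
Proof.
move=> t_inj i.
pose d := \big[Order.min/1]_(i' | i' != i) `|t i' - t i|.
have d_gt0 : 0 < d.
  apply/bigmin_gtP; split => // i' i'i; rewrite normr_gt0 subr_eq0.
  by apply: contra i'i => /eqP/t_inj ->.
have d_le i' : i' != i -> d <= `|t i' - t i|.
  by move=> i'i; rewrite /d (bigD1 i') //= ge_min lexx.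
have [a] : exists a : rat, ratr a \in `]t i - d, t i[ by apply: rat_in_itvoo; lra.
have [b] : exists b : rat, ratr b \in `]t i, t i + d[ by apply: rat_in_itvoo; lra.
rewrite !in_itv /= => /andP[b1 b2] /andP[a1 a2].
exists (a, b) => i' /=; have [->|i'i] := eqVneq i' i; first by rewrite a2 b1.
apply/negbTE/negP => /andP[lo hi]; have := d_le _ i'i.
by rewrite leNgt ltr_distl; apply/negP/negPn/andP; split; lra.
Qed.

Lemma table_realizes n (t : 'I_n -> R) (k : nat) (e : 'I_n -> nat) :
  injective t -> exists w : table, forall i, lookup w (t i) = k.+2%:R^-1 ^+ e i.
Proof.
move=> /rat_itv_isolating /fin_all_exists [ab isol].
exists [seq ((ab i).1, (ab i).2, k, e i) | i <- enum 'I_n] => i.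
have : i \in enum 'I_n by rewrite mem_enum.
elim: (enum 'I_n) => [//|i0 s IH]; rewrite in_cons /= isol.
by have [->|_ /IH] := eqVneq i i0; rewrite ?eqxx // eq_sym => /negbTE ->.
Qed.

Lemma exists_table_nonroot n (t : 'I_n -> R) (P : {mpoly R[n]}) :
  injective t -> P != 0 -> exists w : table, P.@[fun i => lookup w (t i)] != 0.
Proof.
move=> t_inj /meval_kronecker_neq0 [k Pk].
have [w wt] := table_realizes k (fun i => msize P ^ i)%N t_inj.
by exists w; rewrite (meval_eq _ wt).
Qed.

End CodingTables.

Section LebesgueFacts.
Variable R : realType.

Lemma negligible_lebT (N : set R) : lebesgue_measure.-negligible N ->
  measurable (N : set (lebT R)) /\ leb R N = 0%E.
Proof.
move=> N_negl; split; last exact/negligible_outer_measure.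
apply: negligible_sub_caratheodory.
case: N_negl => B [mB B0 NB]; exists B; split => //; exact: sub_caratheodory.
Qed.

Lemma lebT_measurable_itv01 : measurable (`[0, 1]%classic : set (lebT R)).
Proof. by apply: sub_caratheodory; exact: measurable_itv. Qed.

Lemma leb_itv01 : leb R `[0, 1]%classic = 1%E.
Proof.
rewrite (_ : leb R _ = lebesgue_measure `[0%R, 1%R]%classic) //.
by rewrite lebesgue_measure_itv /= lte_fin ltr01 sube0.
Qed.

Lemma itvco01_not_negligible : ~ (@lebesgue_measure R).-negligible `[0, 1[%classic.
Proof.
move=> itv_negl; suff : lebesgue_measure `[0%R, 1%R[%classic = 0%E :> \bar R.
  by rewrite lebesgue_measure_itv /= lte_fin ltr01 sube0 => /eqP; rewrite onee_eq0.
exact: measure_negligible.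
Qed.

Lemma integrable_cst_itv01 (c : R) :
  (leb R).-integrable (`[0, 1]%classic : set (lebT R)) (EFin \o cst c).
Proof.
apply/integrableP; split; first exact/measurable_realfun.measurable_EFinP/measurable_cst.
rewrite (eq_integral (cst `|c|%:E)) // (integral_cst _ lebT_measurable_itv01).
by rewrite (_ : _ `[0%R, 1%R]%classic = leb R `[0%R, 1%R]%classic) // leb_itv01 mule1 ltry.
Qed.

Lemma ext01_sval (g : R -> R) x :
  ext01 (fun u : unit_itv R => g (sval u)) x = \1_`[0, 1]%classic x * g x.
Proof.
rewrite /ext01 indicE; case: pselect => x01.
  by rewrite mem_set ?mul1r //= in_itv.
by rewrite memNset ?mul0r //= in_itv.
Qed.

End LebesgueFacts.

Section Generators.
Variables (R : realType) (I : Type) (lt : I -> I -> Prop).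
Hypothesis lt_total : forall a b, lt a b \/ a = b \/ lt b a.
Hypothesis small_segments : forall a, ~ ([set: R] #<= [set b | lt b a])%card.
Variables (th : I -> R) (thi : R -> I).
Hypothesis thiK : cancel thi th.
Hypothesis nonN : nonN_eq_c R.

Definition segment a : set R := th @` [set b | lt b a].

Lemma segment_shift_negligible a c :
  lebesgue_measure.-negligible [set y | `[0, 1]%classic y /\ segment a (y + c)].
Proof.
apply: nonN => [y [] //|le_card]; apply: (@small_segments a).
apply: card_le_trans (card_le_trans le_card _) (card_image_le th _).
apply: card_le_trans (card_image_le (fun z => z - c) (segment a)).
by apply: subset_card_le => y [_ Sy]; exists (y + c) => //; rewrite addrK.
Qed.

Lemma segment_itv01_negligible a :
  lebesgue_measure.-negligible (segment a `&` `[0, 1]%classic).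
Proof.
by apply: negligibleS (segment_shift_negligible a 0) => y [Sy y01] /=; rewrite addr0.
Qed.

Lemma exists_notin_segment a : exists2 u, `[0, 1]%classic u & ~ segment a u.
Proof.
apply: contrapT => no_u; apply: itvco01_not_negligible.
apply: negligibleS (segment_itv01_negligible a) => y.
rewrite /= !in_itv /= => /andP[y0 y1]; split; last by rewrite y0 ltW.
by apply: contrapT => nSy; apply: no_u; exists y; rewrite //= in_itv /= y0 ltW.
Qed.

Lemma exists_above_truncn a0 N : exists a, lt a0 a /\ Num.truncn (th a) = N.
Proof.
apply: contrapT => /forallNP not_above; apply: itvco01_not_negligible.
have a0_negl : lebesgue_measure.-negligible [set th a0 - N%:R].
  by exists [set th a0 - N%:R]; split => //; rewrite lebesgue_measure_set1.
apply: negligibleS (negligibleU (segment_shift_negligible a0 N%:R) a0_negl) => y.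
rewrite /= in_itv /= => /andP[y0 y1].
have trunc_y : Num.truncn (y + N%:R) = N.
  by apply: truncn_def; apply/andP; split; [lra | rewrite -natr1; lra].
have [a0_lt|[a0_eq|lt_a0]] := lt_total a0 (thi (y + N%:R)).
- by exfalso; apply: (not_above (thi (y + N%:R))); rewrite thiK.
- by right; rewrite a0_eq thiK addrK.
- by left; split; [rewrite in_itv /= y0 ltW | exists (thi (y + N%:R)); rewrite ?thiK].
Qed.

Definition gen (j : R) (a : I) (u : unit_itv R) : R :=
  coef_at j (th a) * \1_(~` segment a) (sval u).

Lemma exists_gen_lookup (w : table) : exists a u, forall j, gen j a u = lookup w j.
Proof.
have [a [_ trunc_a]] := exists_above_truncn (thi 0) (pickle w).
have [u u01 nSu] := exists_notin_segment a.
have u01' : 0 <= u <= 1 by move: u01; rewrite /= in_itv.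
exists a, (exist _ u u01') => j.
by rewrite /gen indicE mem_set // mulr1 (coef_at_pickle _ trunc_a).
Qed.

Lemma gen_inj : injective gen.
Proof.
move=> j j' eq_gen; apply: contrapT => neq_jj'.
have t_inj : injective (tnth [tuple j; j']).
  by apply/tuple_uniqP; rewrite /= inE andbT; apply/eqP.
have [w wt] := table_realizes 0 val t_inj.
have [a [u gen_w]] := exists_gen_lookup w.
move: (gen_w j'); rewrite -eq_gen gen_w.
move: (wt ord0) (wt ord_max) => /= -> ->.
by rewrite expr0 expr1 => /eqP; rewrite eq_sym invr_eq1 (eqr_nat R 2 1).
Qed.

Definition support a : set R := `[0, 1]%classic `\` segment a.

Lemma support_itv01D a :
  support a = `[0, 1]%classic `\` (segment a `&` `[0, 1]%classic).
Proof. by rewrite /support setDIr setDv setU0. Qed.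

Lemma support_measurable a : measurable (support a : set (lebT R)).
Proof.
have [mN _] := negligible_lebT (segment_itv01_negligible a).
by rewrite support_itv01D; apply: measurableD; [exact: lebT_measurable_itv01 | exact: mN].
Qed.

Lemma leb_support a : leb R (support a) = 1%E.
Proof.
have [mN N0] := negligible_lebT (segment_itv01_negligible a).
rewrite support_itv01D measureD //.
- rewrite setIidr ?subIsetr //.
  change (leb R `[0%R, 1%R]%classic - leb R (segment a `&` `[0%R, 1%R]%classic) = 1)%E.
  by rewrite N0 sube0 leb_itv01.
- exact: lebT_measurable_itv01.
- by change (leb R `[0%R, 1%R]%classic < +oo)%E; rewrite leb_itv01 ltry.
Qed.

Section PolynomialInGenerators.
Variables (n : nat) (t : 'I_n -> R) (P : {mpoly R[n]}).

Definition amplitude a : R := P.@[fun i => coef_at (t i) (th a)].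

Lemma peval_gen_segment a u : segment a (sval u) -> peval gen t P a u = P@_0%MM.
Proof.
move=> Su; rewrite /peval -meval_cst0; apply: meval_eq => i.
by rewrite /gen indicE in_setC mem_set // mulr0.
Qed.

Lemma peval_gen_notin_segment a u :
  ~ segment a (sval u) -> peval gen t P a u = amplitude a.
Proof.
move=> nSu; rewrite /peval /amplitude; apply: meval_eq => i.
by rewrite /gen indicE mem_set // mulr1.
Qed.

Lemma amplitude_norm_le a : `|amplitude a| <= \sum_(m <- msupp P) `|P@_m|.
Proof. by apply: meval_norm_le => i; exact: lookup_norm_le1. Qed.

Hypotheses (t_inj : injective t) (P_neq0 : P != 0).

Lemma peval_gen_neq0 : exists a u, peval gen t P a u != 0.
Proof.
have [w Pw] := exists_table_nonroot t_inj P_neq0.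
have [a [u gen_w]] := exists_gen_lookup w.
by exists a, u; rewrite /peval (meval_eq _ (fun i => gen_w (t i))).
Qed.

Lemma amplitude_cofinal :
  exists2 K0, K0 != 0 & forall a0, exists a, lt a0 a /\ amplitude a = K0.
Proof.
have [w Pw] := exists_table_nonroot t_inj P_neq0.
exists P.@[fun i => lookup w (t i)] => // a0.
have [a [a0a trunc_a]] := exists_above_truncn a0 (pickle w).
by exists a; split => //; apply: meval_eq => i; exact: coef_at_pickle.
Qed.

Hypothesis P0 : P@_0%MM = 0.

Lemma ext01_peval_gen a x :
  ext01 (peval gen t P a) x = amplitude a * \1_(support a) x.
Proof.
have -> : peval gen t P a = fun u => amplitude a * \1_(~` segment a) (sval u).
  apply/funext => u; rewrite indicE; have [Su|nSu] := pselect (segment a (sval u)).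
    by rewrite peval_gen_segment // P0 in_setC mem_set // mulr0.
  by rewrite peval_gen_notin_segment // mem_set // mulr1.
rewrite (ext01_sval (fun r => amplitude a * \1_(~` segment a) r)).
by rewrite /support setDE indicI mulrCA.
Qed.

Lemma measurable_peval_gen a : measurable_fun (`[0, 1]%classic : set (lebT R))
  (ext01 (peval gen t P a) : lebT R -> R).
Proof.
rewrite (funext (ext01_peval_gen a)).
apply: measurable_realfun.measurable_funM; first exact: measurable_cst.
exact: measurable_realfun.measurable_indic (support_measurable a).
Qed.

Lemma peval_gen_dominated : exists g : unit_itv R -> R,
  (leb R).-integrable `[0, 1]%classic (EFin \o ext01 g) /\
  forall a, {ae leb R, forall x, `[0, 1]%classic x ->
                         `|ext01 (peval gen t P a) x| <= ext01 g x}.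
Proof.
pose M : R := \sum_(m <- msupp P) `|P@_m|.
have ext01_M x : `[0, 1]%classic x -> ext01 (fun _ => M) x = M.
  by move=> x01; rewrite (ext01_sval (fun _ => M)) indicE mem_set ?mul1r.
exists (fun _ => M); split.
  apply: (eq_integrable _ (EFin \o cst M)) (integrable_cst_itv01 M).
  - exact: lebT_measurable_itv01.
  - by move=> x; rewrite inE => x01 /=; rewrite ext01_M.
move=> a; apply: aeW => x x01; rewrite ext01_M // ext01_peval_gen normrM.
apply: le_trans (amplitude_norm_le a); rewrite ler_piMr // indicE.
by case: (_ \in _); rewrite ?normr1 ?normr0.
Qed.

Lemma peval_gen_cvg0 : {ae leb R, forall x, `[0, 1]%classic x ->
  kconv lt (fun a => ext01 (peval gen t P a) x) (ext01 (fun _ : unit_itv R => 0) x)}.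
Proof.
apply: aeW => x x01 U; rewrite (ext01_sval (fun _ => 0)) mulr0 => U0.
exists (thi x) => a lt_xa; rewrite ext01_peval_gen indicE memNset ?mulr0.
  exact: nbhs_singleton.
by move=> [_]; apply; exists (thi x); rewrite ?thiK.
Qed.

Lemma integral_peval_gen a :
  (\int[leb R]_(x in `[0%R, 1%R]%classic)
     `|ext01 (peval gen t P a) x - ext01 (fun _ : unit_itv R => 0) x|%:E)%E =
  `|amplitude a|%:E.
Proof.
transitivity (\int[leb R]_(x in `[0%R, 1%R]%classic)
                (`|amplitude a| * \1_(support a) x)%:E)%E.
  apply: eq_integral => x _.
  rewrite ext01_peval_gen (ext01_sval (fun _ => 0)) mulr0 subr0 normrM.
  by rewrite (ger0_norm (x := \1_(support a) x)).
rewrite (integralZl_indic (@lebT_measurable_itv01 R) (fun _ => support a)).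
- rewrite integral_indic; [|exact: lebT_measurable_itv01|exact: support_measurable].
  rewrite setIidl => [|x []//].
  change (`|amplitude a|%:E * leb R (support a) = `|amplitude a|%:E)%E.
  by rewrite leb_support mule1.
- by rewrite ltNge normr_ge0.
- exact: support_measurable.
Qed.

Lemma peval_gen_L1_not_cvg0 : ~ kconv lt (fun a =>
  (\int[leb R]_(x in `[0%R, 1%R]%classic)
     `|ext01 (peval gen t P a) x - ext01 (fun _ : unit_itv R => 0) x|%:E)%E) 0%E.
Proof.
move=> L1_cvg0; have [K0 K0_neq0 K0_cofinal] := amplitude_cofinal.
have U0 : nbhs (0%E : \bar R) [set y | (y < `|K0|%:E)%E].
  apply: open_nbhs_nbhs; split; first exact: open_ereal_lt_ereal.
  by rewrite /= lte_fin normr_gt0.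
have [a0 near0] := L1_cvg0 _ U0.
have [a [a0a Ka]] := K0_cofinal a0.
by have := near0 a a0a; rewrite /= integral_peval_gen Ka ltxx.
Qed.

Lemma ND_peval_gen : ND lt (peval gen t P).
Proof.
split; [exact: measurable_peval_gen | exact: peval_gen_dominated |].
exists (fun _ => 0); split.
- apply: (eq_integrable (@lebT_measurable_itv01 R) (cst 0)); last exact: integrable0.
  by move=> x _ /=; rewrite (ext01_sval (fun _ => 0)) mulr0.
- exact: peval_gen_cvg0.
- exact: peval_gen_L1_not_cvg0.
Qed.

End PolynomialInGenerators.

Lemma gen_strongly_c_algebrable : @strongly_c_algebrable R I (@ND R I lt).
Proof.
exists R, gen; split.
- exact: card_eqxx.
- exact: gen_inj.
- move=> n t P t_inj [m Pm] peval0.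
  have P_neq0 : P != 0 by apply: contraPneq Pm => ->; rewrite mcoeff0.
  by have [a [u]] := peval_gen_neq0 t_inj P_neq0; rewrite peval0 eqxx.
- move=> n t P t_inj P0 peval_neq0; apply: ND_peval_gen => //.
  apply/eqP => P_eq0; apply: peval_neq0; rewrite P_eq0.
  by apply/funext => a; apply/funext => u; exact: meval0.
Qed.

End Generators.

Theorem mainTheorem13 (R : realType) (I : Type) (lt : I -> I -> Prop) :
  @continuum_index R I lt -> nonN_eq_c R ->
  @strongly_c_algebrable R I (@ND R I lt).
Proof.
move=> [_ lt_total _ /card_set_bijP[th th_bij] small_segments] nonN.
rewrite setTT_bijective in th_bij; case: th_bij => thi _ thiK.
exact: (@gen_strongly_c_algebrable R I lt lt_total small_segments th thi thiK nonN).
Qed.
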